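(* Let $k$ be a positive integer. If a graph $G$ is $k$-maximal, then $\kappa'(G)=\overline{\kappa'}(G)=k$.
   Context: Graphs are finite, loopless, possibly with multiple edges. $\kappa'(G)$ is the edge connectivity and $\overline{\kappa'}(G)=\max\{\kappa'(H): H \text{ a subgraph of } G\}$. A graph $G$ is $k$-maximal if $\overline{\kappa'}(G)\le k$ but for any new edge $e\notin E(G)$ joining two vertices of $G$ (possibly parallel to an existing edge), $\overline{\kappa'}(G+e)\ge k+1$. *)

(* Finite loopless multigraphs on a finite vertex type V,
   represented by an edge-multiplicity function m : V -> V -> nat
   (m x y = number of parallel edges between x and y). *)
From mathcomp Require Import all_boot all_order.
Set Implicit Arguments. Unset Strict Implicit. Unset Printing Implicit Defensive.

Section Multigraphs.
Variable V : finType.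

Definition mgraph (m : V -> V -> nat) : Prop :=
  (forall x y, m x y = m y x) /\ (forall x, m x x = 0).

Definition cut_size (S X : {set V}) (m : V -> V -> nat) : nat :=
  \sum_(x in X) \sum_(y in S :\: X) m x y.

(* edge connectivity kappa' of the graph with vertex set S and edge
   multiplicities m (supported on S): the minimum size of an edge cut
   [X, S\X] with X a nonempty proper subset of S; 0 if |S| <= 1.
   The identity of the min is the total edge count (times 2), which is an
   upper bound for every cut, so this is the true minimum. *)
Definition edge_conn (S : {set V}) (m : V -> V -> nat) : nat :=
  if #|S| <= 1 then 0
  else \big[minn/ \sum_(x in S) \sum_(y in S) m x y]_(X : {set V} |
          (X \proper S) && (X != set0)) cut_size S X m.

Definition subgraphb (S : {set V}) (h m : V -> V -> nat) : bool :=
  [forall x, forall y, [&& h x y <= m x y, h x y == h y x &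
                         (h x y != 0) ==> (x \in S) && (y \in S)]].

(* maximum edge multiplicity of m; every subgraph multiplicity is bounded
   by it, so subgraphs are enumerated by finite functions into 'I_(M+1) *)
Definition maxmult (m : V -> V -> nat) : nat := \max_(p : V * V) m p.1 p.2.

Definition kbar (m : V -> V -> nat) : nat :=
  \max_(S : {set V})
    \max_(f : {ffun V * V -> 'I_(maxmult m).+1} |
            subgraphb S (fun x y => val (f (x, y))) m)
       edge_conn S (fun x y => val (f (x, y))).

Definition add_edge (m : V -> V -> nat) (u v : V) : V -> V -> nat :=
  fun x y => m x y + (((x == u) && (y == v)) || ((x == v) && (y == u))).

Definition k_maximal (k : nat) (m : V -> V -> nat) : Prop :=
  kbar m <= k /\ forall u v : V, u != v -> k.+1 <= kbar (add_edge m u v).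

End Multigraphs.

(* If some cut [X, V \ X] of a k-maximal graph G had fewer than k edges, add
   an edge e across it.  A subgraph H of G + e either avoids e, and then
   kappa'(H) <= kbar(G) <= k, or its vertex set S meets both X and V \ X, and
   then the cut [S :&: X, S \ X] of H has at most |[X, V \ X]| + 1 <= k edges.
   Hence kbar(G + e) <= k, contradicting maximality.  So kappa'(G) >= k, while
   kappa'(G) <= kbar(G) <= k trivially. *)
From mathcomp Require Import all_boot all_order.
From Stdlib Require Import FunctionalExtensionality.

Set Implicit Arguments.
Unset Strict Implicit.
Unset Printing Implicit Defensive.

Lemma bigmin_leq (I : eqType) (r : seq I) (P : pred I) (F : I -> nat) x j :
  j \in r -> P j -> \big[minn/x]_(i <- r | P i) F i <= F j.
Proof.
elim: r => // a r IHr; rewrite inE big_cons => /predU1P[-> ->|jr Pj].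
  exact: geq_minl.
by case: (P a); rewrite ?geq_min IHr ?orbT.
Qed.

Section EdgeConnectivity.
Variable V : finType.
Implicit Types (S X : {set V}) (h m : V -> V -> nat).

Lemma leq_sum_subset (A B : {set V}) (F : V -> nat) :
  A \subset B -> \sum_(i in A) F i <= \sum_(i in B) F i.
Proof.
move/subsetP=> AB.
by apply: (sub_le_big leqnn (fun x y => leq_addr y x)) => i /AB.
Qed.

Lemma subgraphP S h m :
  reflect [/\ forall x y, h x y <= m x y, forall x y, h x y = h y x
            & forall x y, h x y != 0 -> (x \in S) && (y \in S)]
          (subgraphb S h m).
Proof.
apply: (iffP forallP) => [Hs | [hm hsym hS] x].
  by split=> x y; have /forallP/(_ y)/and3P[? /eqP ? /implyP] := Hs x.
by apply/forallP=> y; rewrite hm [h y x]hsym eqxx; apply/implyP => /hS.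
Qed.

Lemma subgraph_self m : mgraph m -> subgraphb [set: V] m m.
Proof. by case=> msym _; apply/subgraphP; split=> // x y; rewrite !inE. Qed.

Lemma edge_conn_le_kbar S h m : subgraphb S h m -> edge_conn S h <= kbar m.
Proof.
move=> Hs; have /subgraphP[hm _ _] := Hs.
have h_small x y : h x y < (maxmult m).+1.
  by rewrite ltnS (leq_trans (hm x y)) // (leq_bigmax (x, y)).
pose f : {ffun V * V -> 'I_(maxmult m).+1} := [ffun p => inord (h p.1 p.2)].
have hf : h = fun x y => val (f (x, y)).
  by do 2!apply: functional_extensionality => ?; rewrite ffunE /= inordK.
rewrite hf in Hs *; apply: leq_trans (leq_bigmax S).
exact: (leq_bigmax_cond f Hs).
Qed.

Lemma edge_conn_le_cut S X h :
  X \proper S -> X != set0 -> edge_conn S h <= cut_size S X h.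
Proof.
move=> XS X0; rewrite /edge_conn; case: ifP => // _.
by apply: bigmin_leq; rewrite ?mem_index_enum ?XS.
Qed.

Lemma cut_size_le_total S X h :
  X \subset S -> cut_size S X h <= \sum_(x in S) \sum_(y in S) h x y.
Proof.
move=> XS; apply: leq_trans (leq_sum_subset _ XS).
by apply: leq_sum => x _; apply/leq_sum_subset/subsetDl.
Qed.

Lemma edge_conn_ge S h k :
  1 < #|S| ->
  (forall X, X \proper S -> X != set0 -> k <= cut_size S X h) ->
  k <= edge_conn S h.
Proof.
move=> S2 cut_ge; rewrite /edge_conn ifN -?ltnNge //.
have [u uS] : exists u, u \in S by apply/set0Pn; rewrite -card_gt0 ltnW.
have uS' : [set u] \proper S.
  by rewrite properEcard sub1set uS cards1.
have u0 : [set u] != set0 by apply/set0Pn; exists u; rewrite inE.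
apply: (big_ind (leq k)) => [|x y|X /andP[]]; last exact: cut_ge.
- exact: leq_trans (cut_ge _ uS' u0) (cut_size_le_total _ (proper_sub uS')).
- by move=> kx ky; rewrite leq_min kx ky.
Qed.

Lemma cut_size_add_edge X m u v :
  u \in X -> v \notin X ->
  cut_size [set: V] X (add_edge m u v) = (cut_size [set: V] X m).+1.
Proof.
move=> uX vX; rewrite /cut_size /add_edge -addn1.
under eq_bigr do rewrite big_split /=.
rewrite big_split /=; congr (_ + _).
have uv_sep x y : x \in X -> y \notin X -> (x == v) && (y == u) = false.
  by move=> _ yX; apply/negbTE/negP => /andP[_ /eqP yu]; rewrite yu uX in yX.
rewrite (bigD1 u) //= [s in _ + s]big1 ?addn0 => [|x /andP[xX xu]]; last first.
  by apply: big1 => y; rewrite !inE andbT => yX; rewrite (negbTE xu) uv_sep.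
have vXc : v \in [set: V] :\: X by rewrite !inE vX.
rewrite (bigD1 v) //= !eqxx big1 // => y /andP[].
rewrite !inE => /andP[yX _] yv.
by rewrite (negbTE yv) uv_sep.
Qed.

Lemma cut_size_subgraph_le S X h m :
  subgraphb S h m -> cut_size S (S :&: X) h <= cut_size [set: V] X m.
Proof.
case/subgraphP=> hm _ _; rewrite /cut_size setDIr setDv set0U.
apply: leq_trans (leq_sum_subset _ (subsetIr S X)).
apply: leq_sum => x _.
apply: leq_trans (leq_sum_subset _ (setSD X (subsetT S))) _.
by apply: leq_sum => y _.
Qed.

Lemma subgraph_add_edge S h m u v :
  ~~ ((u \in S) && (v \in S)) ->
  subgraphb S h (add_edge m u v) -> subgraphb S h m.
Proof.
move=> uvS /subgraphP[hm hsym hS]; apply/subgraphP; split=> // x y.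
have := hm x y; rewrite /add_edge.
case: (h x y =P 0) => [-> //| /eqP hxy].
have /andP[xS yS] := hS x y hxy.
have /negbTE -> : ~~ (((x == u) && (y == v)) || ((x == v) && (y == u))).
  by apply: contra uvS => /orP[]/andP[/eqP<- /eqP<-]; rewrite xS yS.
by rewrite addn0.
Qed.

Lemma kbar_add_edge_le X m u v :
  u \in X -> v \notin X ->
  kbar (add_edge m u v) <= maxn (kbar m) (cut_size [set: V] X m).+1.
Proof.
move=> uX vX; apply/bigmax_leqP => S _; apply/bigmax_leqP => f Hs.
set h := fun x y => val (f (x, y)) in Hs *.
have [/andP[SX SXc] | crossing] :=
  boolP ((S :&: X \proper S) && (S :&: X != set0)).
  apply: leq_trans (edge_conn_le_cut h SX SXc) _.
  rewrite -(cut_size_add_edge m uX vX) leq_max orbC.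
  by rewrite cut_size_subgraph_le.
have uvS : ~~ ((u \in S) && (v \in S)).
  apply: contra crossing => /andP[uS vS]; apply/andP; split.
    apply/properP; split; first exact: subsetIl.
    by exists v; rewrite // inE (negbTE vX) andbF.
  by apply/set0Pn; exists u; rewrite inE uS.
by rewrite leq_max edge_conn_le_kbar // (subgraph_add_edge uvS).
Qed.

End EdgeConnectivity.

Theorem lemma3p3 (V : finType) (m : V -> V -> nat) (k : nat) :
  0 < k -> 2 <= #|V| -> mgraph m -> k_maximal k m ->
  edge_conn [set: V] m = k /\ kbar m = k.
Proof.
move=> _ V2 Gm [kbar_le maximal].
have conn_le_kbar := edge_conn_le_kbar (subgraph_self Gm).
have cut_ge (X : {set V}) :
    X \proper [set: V] -> X != set0 -> k <= cut_size [set: V] X m.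
  move=> XT X0; rewrite leqNgt; apply/negP => small_cut.
  have [u uX] := set0Pn _ X0.
  have [_ [v _ vX]] := properP XT.
  have uv : u != v by apply: contraNneq vX => <-.
  have := leq_trans (maximal u v uv) (kbar_add_edge_le m uX vX).
  by rewrite leq_max ltnNge kbar_le /= ltnS leqNgt small_cut.
have conn_ge : k <= edge_conn [set: V] m.
  by apply: edge_conn_ge; rewrite ?cardsT.
have conn_k : edge_conn [set: V] m = k.
  by apply/eqP; rewrite eqn_leq conn_ge (leq_trans conn_le_kbar).
by split=> //; apply/eqP; rewrite eqn_leq kbar_le -{1}conn_k conn_le_kbar.
Qed.
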